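(* Let $S_1,S_2\subseteq\mathbb N$ be numerical semigroups, $S=S_1\times S_2\subseteq\mathbb N^2$, and $\boldsymbol\omega=(w_1,w_2)\in S$ with $w_1,w_2>0$. Write $\mathrm{Ap}(S_1,w_1)=\{u_1<u_2<\dots<u_{w_1}\}$ and $\mathrm{Ap}(S_2,w_2)=\{v_1<\dots<v_{w_2}\}$, and set formally $u_{w_1+1}=v_{w_2+1}=\infty$. Then the levels of $\mathrm{Ap}(S,\boldsymbol\omega)=S\setminus(\boldsymbol\omega+S)$ are $A_1,\dots,A_{w_1+w_2}$, where $A_1=\{(0,0)\}$ and, for $2\le k\le w_1+w_2$, $$A_k=\bigcup_{\substack{1\le i\le w_1,\ 1\le j\le w_2\\ i+j=k}}\Big(\{(u_i,b): b\in S_2,\ v_j<b\le v_{j+1}\}\cup\{(a,v_j): a\in S_1,\ u_i<a\le u_{i+1}\}\Big).$$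
   Context: For a numerical semigroup $T$ and $w\in T$, $\mathrm{Ap}(T,w)=T\setminus(w+T)$, a set with $w$ elements. $S=S_1\times S_2$ is a (non-local) good semigroup and $\boldsymbol\omega+S$ is a good ideal of it. Notation: $\le$ componentwise on $\mathbb Z^2$, $\boldsymbol\alpha\ll\boldsymbol\beta$ means both coordinates strictly smaller, $\boldsymbol\alpha\le\le\boldsymbol\beta$ means $\boldsymbol\alpha=\boldsymbol\beta$ or $\boldsymbol\alpha\ll\boldsymbol\beta$, $\wedge$ componentwise minimum, $\Delta^S_i(\boldsymbol\alpha)=\{\boldsymbol\beta\in S:\beta_i=\alpha_i,\ \beta_j>\alpha_j\ (j\neq i)\}$. Levels of $A=\mathrm{Ap}(S,\boldsymbol\omega)$: $\boldsymbol\alpha\in B$ is a complete infimum of $\boldsymbol\beta^{(1)},\boldsymbol\beta^{(2)}\in B$ if, up to order, $\boldsymbol\beta^{(1)}\in\Delta^S_1(\boldsymbol\alpha)$ and $\boldsymbol\beta^{(2)}\in\Delta^S_2(\boldsymbol\alpha)$. $B^{(1)}$ = maximal elements of $A$ for $\le\le$, $C^{(1)}$ = those that are complete infima of two elements of $B^{(1)}$, $D^{(1)}=B^{(1)}\setminus C^{(1)}$; inductively $B^{(i)}$ = maximal elements for $\le\le$ of $A\setminus\bigcup_{j<i}D^{(j)}$, $C^{(i)},D^{(i)}$ likewise; $A=\bigsqcup_{i=1}^ND^{(i)}$ and the levels are $A_i=D^{(N+1-i)}$. *)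

From Stdlib Require Import Arith.

Definition set1 := nat -> Prop.
Definition set2 := (nat * nat)%type -> Prop.

Definition numerical_semigroup (T : set1) : Prop :=
  T 0 /\ (forall a b, T a -> T b -> T (a + b)) /\
  (exists c, forall n, c <= n -> T n).

Definition apery1 (T : set1) (w : nat) : set1 :=
  fun x => T x /\ ~ (exists t, T t /\ x = w + t).

Definition prodS (S1 S2 : set1) : set2 := fun x => S1 (fst x) /\ S2 (snd x).

Definition apery2 (S : set2) (om : nat * nat) : set2 :=
  fun x => S x /\
    ~ (exists s, S s /\ fst x = fst om + fst s /\ snd x = snd om + snd s).

Definition lele (a b : nat * nat) : Prop :=
  a = b \/ (fst a < fst b /\ snd a < snd b).

Definition maxll (X : set2) : set2 :=
  fun a => X a /\ forall b, X b -> lele a b -> b = a.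

Definition Delta1 (S : set2) (a : nat * nat) : set2 :=
  fun b => S b /\ fst b = fst a /\ snd b > snd a.
Definition Delta2 (S : set2) (a : nat * nat) : set2 :=
  fun b => S b /\ snd b = snd a /\ fst b > fst a.

(* alpha in B is a complete infimum of two elements of B
   (up to order: one in Delta_1, the other in Delta_2) *)
Definition complete_inf (S B : set2) (a : nat * nat) : Prop :=
  B a /\ exists b1 b2, B b1 /\ B b2 /\ Delta1 S a b1 /\ Delta2 S a b2.

(* one step of the construction applied to the remaining set X:
   B = maximal elements, C = complete infima in B, D = B \ C *)
Definition Bstep (X : set2) : set2 := maxll X.
Definition Dstep (S X : set2) : set2 :=
  fun a => Bstep X a /\ ~ complete_inf S (Bstep X) a.

Fixpoint Rem (SS A : set2) (n : nat) : set2 :=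
  match n with
  | 0 => A
  | Datatypes.S n' => fun a => Rem SS A n' a /\ ~ Dstep SS (Rem SS A n') a
  end.

(* D^(i) for i >= 1 (paper's indexing) *)
Definition Dlev (S A : set2) (i : nat) : set2 := Dstep S (Rem S A (i - 1)).

(* "the levels of A are L 1, ..., L N":
   D^(1),...,D^(N) are nonempty, A is their (disjoint by construction) union,
   and A_k = D^(N+1-k) equals L k for 1 <= k <= N. *)
Definition are_levels (S A : set2) (N : nat) (L : nat -> set2) : Prop :=
  (forall i, 1 <= i <= N -> exists a, Dlev S A i a) /\
  (forall a, A a <-> exists i, 1 <= i <= N /\ Dlev S A i a) /\
  (forall k, 1 <= k <= N -> forall a, Dlev S A (N + 1 - k) a <-> L k a).

(* bound "x <= u_{i+1}", with the convention u_{w+1} = infinity *)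
Definition le_next (u : nat -> nat) (w i x : nat) : Prop :=
  i < w -> x <= u (Datatypes.S i).

Definition Aform (S1 S2 : set1) (w1 w2 : nat) (u v : nat -> nat)
    (k : nat) : set2 :=
  fun x =>
    if k =? 1 then x = (0, 0) else
    exists i j, 1 <= i <= w1 /\ 1 <= j <= w2 /\ i + j = k /\
      ((fst x = u i /\ S2 (snd x) /\ v j < snd x /\ le_next v w2 j (snd x)) \/
       (snd x = v j /\ S1 (fst x) /\ u i < fst x /\ le_next u w1 i (fst x))).

(* If [u] enumerates Ap(S1,w1) increasingly and [rank u w1 a] counts the
   Apery elements below [a], the level of [(a,b)] in Ap(S,w) is
   [rank u w1 a + rank v w2 b + 1].  Along [<<] this level strictly increases
   on Ap(S,w), since a coordinate lying in an Apery set gains rank when it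
   grows; hence elements of the top remaining level are maximal.  Conversely an
   element [x] below the top level [m] either lies [<<] below an element of
   Ap(S,w) of level at most [m] (raise an Apery coordinate to the next Apery
   element, and the other one to the least larger element of the semigroup),
   or both its coordinates are Apery elements and it is the complete infimum
   of two elements of level [m].  So D^(n) is the set of elements of level
   [w1 + w2 + 1 - n], and the explicit A_k is read off from the ranks. *)

From Stdlib Require Import Arith Lia Classical FunctionalExtensionality PropExtensionality.

Record apery_enumeration (T : set1) (w : nat) (u : nat -> nat) : Prop := {
  enum_semigroup : numerical_semigroup T;
  enum_w_in : T w;
  enum_w_pos : 0 < w;
  enum_incr : forall i j, 1 <= i -> i < j -> j <= w -> u i < u j;
  enum_apery : forall x, apery1 T w x <-> exists i, 1 <= i <= w /\ x = u i }.

Arguments enum_semigroup {T w u}.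
Arguments enum_w_in {T w u}.
Arguments enum_w_pos {T w u}.
Arguments enum_incr {T w u}.
Arguments enum_apery {T w u}.

Fixpoint rank (u : nat -> nat) (n a : nat) : nat :=
  match n with
  | 0 => 0
  | S n' => rank u n' a + (if u (S n') <? a then 1 else 0)
  end.

Lemma rank_le u n a : rank u n a <= n.
Proof. induction n as [|n IH]; simpl; [lia|]. destruct (_ <? _); lia. Qed.

Lemma rank_mono u n a a' : a <= a' -> rank u n a <= rank u n a'.
Proof.
  intros Ha. induction n as [|n IH]; simpl; [lia|].
  destruct (Nat.ltb_spec (u (S n)) a), (Nat.ltb_spec (u (S n)) a'); lia.
Qed.

Section AperyEnumeration.

Context {T : set1} {w : nat} {u : nat -> nat}.
Hypothesis hu : apery_enumeration T w u.

Local Notation rk := (rank u w).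

Lemma enum_lt_iff i k : 1 <= i <= w -> 1 <= k <= w -> (u i < u k <-> i < k).
Proof.
  intros Hi Hk. split; intro H; [|apply (enum_incr hu); lia].
  destruct (lt_eq_lt_dec i k) as [[Hik| ->]|Hki]; [easy|lia|].
  pose proof (enum_incr hu k i ltac:(lia) Hki ltac:(lia)). lia.
Qed.

Lemma enum_le i k : 1 <= i -> i <= k -> k <= w -> u i <= u k.
Proof.
  intros. destruct (Nat.eq_dec i k) as [->|]; [lia|].
  pose proof (enum_incr hu i k); lia.
Qed.

Lemma rank_ge_iff_prefix n a : n <= w ->
  forall k, 1 <= k <= n -> (k <= rank u n a <-> u k < a).
Proof.
  induction n as [|n IH]; intros Hn k Hk; [lia|]. simpl.
  destruct (Nat.ltb_spec (u (S n)) a) as [Hlt|Hge].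
  - assert (Hall : rank u n a = n).
    { destruct n as [|n]; [reflexivity|].
      pose proof (rank_le u (S n) a).
      enough (S n <= rank u (S n) a) by lia.
      apply IH; [lia|lia|]. pose proof (enum_le (S n) (S (S n))); lia. }
    pose proof (enum_le k (S n)). lia.
  - pose proof (rank_le u n a).
    destruct (Nat.eq_dec k (S n)) as [->|]; [lia|].
    rewrite Nat.add_0_r. apply IH; lia.
Qed.

Lemma rank_ge_iff k a : 1 <= k <= w -> (k <= rk a <-> u k < a).
Proof. apply rank_ge_iff_prefix. lia. Qed.

Lemma rank_unique i a : i <= w ->
  (forall k, 1 <= k <= w -> (k <= i <-> u k < a)) -> rk a = i.
Proof.
  intros Hi H. pose proof (rank_le u w a).
  destruct (lt_eq_lt_dec (rk a) i) as [[Hlt|]|Hgt]; [|easy|].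
  - pose proof (H i ltac:(lia)). pose proof (rank_ge_iff i a ltac:(lia)). lia.
  - pose proof (H (rk a) ltac:(lia)). pose proof (rank_ge_iff (rk a) a ltac:(lia)).
    lia.
Qed.

Lemma rank_enum i : 1 <= i <= w -> rk (u i) = i - 1.
Proof.
  intros Hi. apply rank_unique; [lia|]. intros k Hk.
  pose proof (enum_lt_iff k i Hk Hi). lia.
Qed.

Lemma rank_succ_enum i : 1 <= i <= w -> rk (S (u i)) = i.
Proof.
  intros Hi. apply rank_unique; [lia|]. intros k Hk.
  pose proof (enum_lt_iff i k Hi Hk). lia.
Qed.

Lemma apery_enum i : 1 <= i <= w -> apery1 T w (u i).
Proof. intros Hi. apply (enum_apery hu). eauto. Qed.

Lemma apery_0 : apery1 T w 0.
Proof.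
  destruct (enum_semigroup hu) as [H0 _]. pose proof (enum_w_pos hu).
  split; [exact H0|]. intros [t [_ Ht]]. lia.
Qed.

Lemma enum_1 : u 1 = 0.
Proof.
  pose proof (enum_w_pos hu).
  destruct (proj1 (enum_apery hu 0) apery_0) as [i [Hi E]].
  pose proof (enum_le 1 i). lia.
Qed.

Lemma rank_eq0_iff a : rk a = 0 <-> a = 0.
Proof.
  pose proof (enum_w_pos hu) as Hw. split; intro Ha.
  - pose proof (rank_ge_iff 1 a ltac:(lia)). pose proof enum_1. lia.
  - subst. pose proof (rank_enum 1 ltac:(lia)) as H1. rewrite enum_1 in H1. exact H1.
Qed.

Lemma rank_eq_iff i a : 1 <= i <= w -> (rk a = i <-> u i < a /\ le_next u w i a).
Proof.
  intros Hi. unfold le_next. pose proof (rank_le u w a).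
  pose proof (rank_ge_iff i a Hi). split.
  - intros E. split; [lia|]. intros Hiw.
    pose proof (rank_ge_iff (S i) a ltac:(lia)). lia.
  - intros [Hlt Hle]. destruct (Nat.eq_dec (rk a) i) as [|Hne]; [easy|].
    pose proof (rank_ge_iff (S i) a ltac:(lia)). pose proof (Hle ltac:(lia)). lia.
Qed.

Lemma rank_succ_apery a : apery1 T w a -> rk (S a) = S (rk a).
Proof.
  intros Ha. destruct (proj1 (enum_apery hu a) Ha) as [i [Hi ->]].
  rewrite rank_succ_enum, rank_enum; lia.
Qed.

Lemma rank_succ_nonapery a : ~ apery1 T w a -> rk (S a) = rk a.
Proof.
  intros Ha. apply rank_unique; [apply rank_le|]. intros k Hk.
  rewrite rank_ge_iff by exact Hk.
  assert (u k <> a) by (intros <-; exact (Ha (apery_enum k Hk))). lia.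
Qed.

Lemma rank_succ_le a : rk (S a) <= S (rk a).
Proof.
  destruct (classic (apery1 T w a)) as [Ha|Ha].
  - rewrite rank_succ_apery by exact Ha. lia.
  - rewrite rank_succ_nonapery by exact Ha. lia.
Qed.

Lemma rank_lt_of_apery a a' : apery1 T w a -> a < a' -> rk a < rk a'.
Proof.
  intros Ha Hlt. pose proof (rank_mono u w (S a) a' Hlt).
  rewrite rank_succ_apery in * by exact Ha. lia.
Qed.

Lemma rank_apery_lt a : apery1 T w a -> rk a < w.
Proof.
  intros Ha. pose proof (rank_le u w (S a)). rewrite rank_succ_apery in * by exact Ha.
  lia.
Qed.

Lemma apery_above a : rk (S a) < w ->
  exists a', apery1 T w a' /\ a < a' /\ rk a' = rk (S a).
Proof.
  intros Hr. exists (u (S (rk (S a)))). split; [apply apery_enum; lia|].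
  pose proof (rank_ge_iff (S (rk (S a))) (S a) ltac:(lia)).
  rewrite rank_enum by lia. split; lia.
Qed.

Lemma exists_above a : T a -> exists a', T a' /\ a < a' /\ rk a' = rk (S a).
Proof.
  intros Ha. pose proof (rank_le u w (S a)).
  destruct (Nat.lt_ge_cases (rk (S a)) w) as [Hlt|Hge].
  - destruct (apery_above a Hlt) as [a' (Ha' & ? & ?)].
    exists a'. split; [exact (proj1 Ha')|auto].
  - destruct (enum_semigroup hu) as (_ & Hadd & _). pose proof (enum_w_pos hu).
    exists (a + w). split; [exact (Hadd a w Ha (enum_w_in hu))|].
    pose proof (rank_mono u w (S a) (a + w) ltac:(lia)).
    pose proof (rank_le u w (a + w)). lia.
Qed.

Lemma exists_rank t : t <= w -> exists e, T e /\ rk e = t.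
Proof.
  intros Ht. destruct t as [|t].
  - exists 0. split; [exact (proj1 apery_0)|]. apply rank_eq0_iff. reflexivity.
  - destruct (exists_above (u (S t))) as [e (He & _ & Hr)].
    + apply apery_enum. lia.
    + exists e. rewrite rank_succ_enum in Hr by lia. auto.
Qed.

End AperyEnumeration.

Lemma apery2_prodS S1 S2 w1 w2 x :
  apery2 (prodS S1 S2) (w1, w2) x <->
  S1 (fst x) /\ S2 (snd x) /\ (apery1 S1 w1 (fst x) \/ apery1 S2 w2 (snd x)).
Proof.
  destruct x as [a b]. unfold apery2, apery1, prodS; simpl. split.
  - intros [[Ha Hb] Hnot]. repeat split; try assumption.
    apply NNPP. intros Hboth. apply Hnot.
    apply not_or_and in Hboth as [Hna Hnb].
    destruct (NNPP _ (fun H => Hna (conj Ha H))) as [s1 [Hs1 ->]].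
    destruct (NNPP _ (fun H => Hnb (conj Hb H))) as [s2 [Hs2 ->]].
    exists (s1, s2). simpl. auto.
  - intros (Ha & Hb & Hab). split; [split; assumption|].
    intros [[s1 s2] [[Hs1 Hs2] [E1 E2]]]. simpl in *.
    destruct Hab as [[_ Hn]|[_ Hn]]; apply Hn; eauto.
Qed.

Definition level (u : nat -> nat) (w1 : nat) (v : nat -> nat) (w2 : nat)
    (x : nat * nat) : nat :=
  rank u w1 (fst x) + rank v w2 (snd x) + 1.

Section Coordinates.

Context {T1 T2 : set1} {w1 w2 : nat} {u v : nat -> nat}.
Hypothesis hu : apery_enumeration T1 w1 u.
Hypothesis hv : apery_enumeration T2 w2 v.

Lemma aform_piece_of_rank a b k : 2 <= k -> apery1 T1 w1 a -> T2 b ->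
  rank u w1 a + rank v w2 b + 1 = k ->
  exists i j, 1 <= i <= w1 /\ 1 <= j <= w2 /\ i + j = k /\
    ((a = u i /\ T2 b /\ v j < b /\ le_next v w2 j b) \/
     (b = v j /\ T1 a /\ u i < a /\ le_next u w1 i a)).
Proof.
  intros Hk Ha Hb Hl. pose proof (proj1 Ha) as Ha1.
  destruct (proj1 (enum_apery hu a) Ha) as [i [Hi ->]].
  pose proof (rank_enum hu i Hi) as Hri. pose proof (rank_le v w2 b).
  destruct (Nat.eq_dec (rank v w2 b) 0) as [Hb0|Hb0].
  - assert (b = 0) as -> by exact (proj1 (rank_eq0_iff hv b) Hb0).
    pose proof (enum_w_pos hv).
    exists (i - 1), 1. repeat split; try lia. right.
    split; [symmetry; exact (enum_1 hv)|]. split; [exact Ha1|].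
    apply (rank_eq_iff hu); lia.
  - exists i, (rank v w2 b). repeat split; try lia. left.
    repeat split; try assumption; apply (rank_eq_iff hv); lia.
Qed.

Lemma rank_of_aform_piece i j b : 1 <= i <= w1 -> 1 <= j <= w2 ->
  v j < b -> le_next v w2 j b -> rank u w1 (u i) + rank v w2 b + 1 = i + j.
Proof.
  intros Hi Hj H1 H2.
  rewrite (rank_enum hu i Hi), (proj2 (rank_eq_iff hv j b Hj) (conj H1 H2)). lia.
Qed.

End Coordinates.

Section Levels.

Context {S1 S2 : set1} {w1 w2 : nat} {u v : nat -> nat}.
Hypothesis hu : apery_enumeration S1 w1 u.
Hypothesis hv : apery_enumeration S2 w2 v.

Local Notation P := (prodS S1 S2).
Local Notation A := (apery2 (prodS S1 S2) (w1, w2)).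
Local Notation lev := (level u w1 v w2).

Lemma level_lt x y : A x -> fst x < fst y -> snd x < snd y -> lev x < lev y.
Proof.
  intros Ax H1 H2. unfold level.
  apply apery2_prodS in Ax as (_ & _ & [Ha|Hb]).
  - pose proof (rank_lt_of_apery hu _ _ Ha H1).
    pose proof (rank_mono v w2 (snd x) (snd y) ltac:(lia)). lia.
  - pose proof (rank_lt_of_apery hv _ _ Hb H2).
    pose proof (rank_mono u w1 (fst x) (fst y) ltac:(lia)). lia.
Qed.

Lemma level_le_top x : A x -> lev x <= w1 + w2.
Proof.
  intros Ax. unfold level. apply apery2_prodS in Ax as (_ & _ & [Ha|Hb]).
  - pose proof (rank_apery_lt hu _ Ha). pose proof (rank_le v w2 (snd x)). lia.
  - pose proof (rank_apery_lt hv _ Hb). pose proof (rank_le u w1 (fst x)). lia.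
Qed.

Lemma level_exists m : 1 <= m <= w1 + w2 -> exists x, A x /\ lev x = m.
Proof.
  intros Hm. pose proof (enum_w_pos hu).
  destruct (exists_rank hv (m - 1 - Nat.min (m - 1) (w1 - 1))) as [e [He Hr]];
    [lia|].
  assert (Ha : apery1 S1 w1 (u (S (Nat.min (m - 1) (w1 - 1))))).
  { apply (apery_enum hu). lia. }
  exists (u (S (Nat.min (m - 1) (w1 - 1))), e). unfold level; simpl.
  rewrite apery2_prodS, (rank_enum hu) by lia; simpl.
  split; [split; [exact (proj1 Ha)|auto]|lia].
Qed.

Let upto_level m : set2 := fun x => A x /\ lev x <= m.

Lemma maxll_upto_level m x : A x -> lev x = m -> maxll (upto_level m) x.
Proof.
  intros Ax Hx. split; [split; [exact Ax|lia]|].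
  intros y [Ay Hy] [E|[H1 H2]]; [auto|].
  pose proof (level_lt x y Ax H1 H2). lia.
Qed.

Lemma raise_in_apery a b : S1 a -> S2 b ->
  rank u w1 (S a) + rank v w2 (S b) < w1 + w2 ->
  exists y, A y /\ a < fst y /\ b < snd y /\
    lev y = rank u w1 (S a) + rank v w2 (S b) + 1.
Proof.
  intros Ha Hb Hr. destruct (Nat.lt_ge_cases (rank u w1 (S a)) w1) as [H1|H1].
  - destruct (apery_above hu a H1) as [a' (Ha' & Hlt & Hra)].
    destruct (exists_above hv b Hb) as [b' (Hb' & Hlt' & Hrb)].
    exists (a', b'). rewrite apery2_prodS. unfold level; simpl.
    split; [split; [exact (proj1 Ha')|auto]|lia].
  - assert (H2 : rank v w2 (S b) < w2) by lia.
    destruct (exists_above hu a Ha) as [a' (Ha' & Hlt & Hra)].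
    destruct (apery_above hv b H2) as [b' (Hb' & Hlt' & Hrb)].
    exists (a', b'). rewrite apery2_prodS. unfold level; simpl.
    split; [split; [exact Ha'|split; [exact (proj1 Hb')|auto]]|lia].
Qed.

Lemma complete_inf_of_apery x :
  apery1 S1 w1 (fst x) -> apery1 S2 w2 (snd x) ->
  exists y1 y2, A y1 /\ lev y1 = S (lev x) /\ Delta1 P x y1 /\
                A y2 /\ lev y2 = S (lev x) /\ Delta2 P x y2.
Proof.
  destruct x as [a b]; simpl. intros Ha Hb.
  pose proof (proj1 Ha) as Ha1. pose proof (proj1 Hb) as Hb1.
  destruct (exists_above hu a Ha1) as [a' (Ha' & Hlt & Hra)].
  destruct (exists_above hv b Hb1) as [b' (Hb' & Hlt' & Hrb)].
  rewrite (rank_succ_apery hu a Ha) in Hra. rewrite (rank_succ_apery hv b Hb) in Hrb.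
  exists (a, b'), (a', b). rewrite !apery2_prodS.
  unfold Delta1, Delta2, prodS, level; simpl. repeat split; auto; lia.
Qed.

Lemma not_Dstep_below m x : A x -> lev x < m -> m <= w1 + w2 ->
  ~ Dstep P (upto_level m) x.
Proof.
  intros Ax Hlt Hm [Bx Hinf]. pose proof Bx as [_ Hmax].
  pose proof Ax as (Ha & Hb & _)%apery2_prodS.
  destruct x as [a b]; unfold level in Hlt; simpl in *.
  destruct (le_lt_dec (rank u w1 (S a) + rank v w2 (S b) + 1) m) as [Hle|Hgt].
  - destruct (raise_in_apery a b Ha Hb ltac:(lia)) as [y (Ay & H1 & H2 & Hy)].
    assert (y = (a, b)) as -> by (apply Hmax; [split; [exact Ay|lia]|right; auto]).
    simpl in *; lia.
  - (* raising both coordinates costs two levels, so [x] is one level below [m]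
       and both of its coordinates are Apery elements *)
    pose proof (rank_succ_le hu a). pose proof (rank_succ_le hv b).
    assert (Ha' : apery1 S1 w1 a).
    { apply NNPP. intros Hna. rewrite (rank_succ_nonapery hu a Hna) in Hgt. lia. }
    assert (Hb' : apery1 S2 w2 b).
    { apply NNPP. intros Hnb. rewrite (rank_succ_nonapery hv b Hnb) in Hgt. lia. }
    rewrite (rank_succ_apery hu a Ha'), (rank_succ_apery hv b Hb') in Hgt.
    destruct (complete_inf_of_apery (a, b) Ha' Hb')
      as (y1 & y2 & Ay1 & L1 & D1 & Ay2 & L2 & D2).
    unfold level in L1, L2; simpl in L1, L2.
    apply Hinf. split; [exact Bx|].
    exists y1, y2. split; [|split; [|split; assumption]];
      apply maxll_upto_level; auto; unfold level; lia.
Qed.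

Lemma Dstep_upto_level m x : 1 <= m <= w1 + w2 ->
  (Dstep P (upto_level m) x <-> A x /\ lev x = m).
Proof.
  intros Hm. split.
  - intros HD. pose proof HD as [[[Ax Hx] _] _]. split; [exact Ax|].
    destruct (Nat.eq_dec (lev x) m) as [|Hne]; [assumption|].
    exfalso. exact (not_Dstep_below m x Ax ltac:(lia) (proj2 Hm) HD).
  - intros [Ax Hx]. split; [exact (maxll_upto_level m x Ax Hx)|].
    intros [_ (y1 & y2 & [[_ L1] _] & [[_ L2] _] & (_ & E1 & H1) & (_ & E2 & H2))].
    unfold level in *. apply apery2_prodS in Ax as (_ & _ & [Ha|Hb]).
    + pose proof (rank_lt_of_apery hu _ _ Ha H2). rewrite E2 in L2. lia.
    + pose proof (rank_lt_of_apery hv _ _ Hb H1). rewrite E1 in L1. lia.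
Qed.

Lemma Rem_upto_level n : n <= w1 + w2 -> Rem P A n = upto_level (w1 + w2 - n).
Proof.
  induction n as [|n IH]; intros Hn; cbn [Rem].
  - apply functional_extensionality. intros x. apply propositional_extensionality.
    split; [|intros [Ax _]; exact Ax].
    intros Ax. split; [exact Ax|]. pose proof (level_le_top x Ax). lia.
  - rewrite IH by lia. apply functional_extensionality. intros x.
    apply propositional_extensionality.
    rewrite Dstep_upto_level by lia. unfold upto_level. split.
    + intros [[Ax Hx] Hnot]. split; [exact Ax|].
      destruct (Nat.eq_dec (lev x) (w1 + w2 - n)); [tauto|lia].
    + intros [Ax Hx]. split; [split; [exact Ax|lia]|]. intros [_ E]. lia.
Qed.

Lemma Dlev_level i x : 1 <= i <= w1 + w2 ->
  (Dlev P A i x <-> A x /\ lev x = w1 + w2 + 1 - i).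
Proof.
  intros Hi. unfold Dlev.
  rewrite Rem_upto_level, Dstep_upto_level by lia.
  replace (w1 + w2 - (i - 1)) with (w1 + w2 + 1 - i) by lia. reflexivity.
Qed.

Lemma aform_level k x : 1 <= k -> (A x /\ lev x = k <-> Aform S1 S2 w1 w2 u v k x).
Proof.
  intros Hk. unfold Aform. rewrite apery2_prodS.
  destruct x as [a b]; unfold level; simpl.
  destruct (Nat.eqb_spec k 1) as [->|Hk1].
  - split.
    + intros [_ E]. f_equal; [apply (rank_eq0_iff hu)|apply (rank_eq0_iff hv)]; lia.
    + intros [= -> ->]. rewrite (proj2 (rank_eq0_iff hu 0) eq_refl),
        (proj2 (rank_eq0_iff hv 0) eq_refl).
      pose proof (apery_0 hu) as H0. split; [|reflexivity].
      split; [exact (proj1 H0)|split; [exact (proj1 (apery_0 hv))|auto]].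
  - split.
    + intros [(Ha & Hb & [Pa|Pb]) Hl].
      * apply (aform_piece_of_rank hu hv); auto; lia.
      * destruct (aform_piece_of_rank hv hu b a k) as (j & i & Hj & Hi & Hs & Hor);
          auto; try lia.
        exists i, j. repeat split; try lia. tauto.
    + intros (i & j & Hi & Hj & Hs & [(-> & Hb & H1 & H2)|(-> & Ha & H1 & H2)]).
      * pose proof (rank_of_aform_piece hu hv i j b Hi Hj H1 H2).
        pose proof (apery_enum hu i Hi) as Pa.
        split; [split; [exact (proj1 Pa)|auto]|lia].
      * pose proof (rank_of_aform_piece hv hu j i a Hj Hi H1 H2).
        pose proof (apery_enum hv j Hj) as Pb.
        split; [split; [exact Ha|split; [exact (proj1 Pb)|auto]]|lia].
Qed.

End Levels.

Theorem corollary4p5 (S1 S2 : set1) (w1 w2 : nat) (u v : nat -> nat)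
  (hS1 : numerical_semigroup S1) (hS2 : numerical_semigroup S2)
  (hw1S : S1 w1) (hw2S : S2 w2) (hw1 : 0 < w1) (hw2 : 0 < w2)
  (hu_incr : forall i j, 1 <= i -> i < j -> j <= w1 -> u i < u j)
  (hu_ap : forall x, apery1 S1 w1 x <-> exists i, 1 <= i <= w1 /\ x = u i)
  (hv_incr : forall i j, 1 <= i -> i < j -> j <= w2 -> v i < v j)
  (hv_ap : forall y, apery1 S2 w2 y <-> exists j, 1 <= j <= w2 /\ y = v j) :
  are_levels (prodS S1 S2) (apery2 (prodS S1 S2) (w1, w2)) (w1 + w2)
    (Aform S1 S2 w1 w2 u v).
Proof.
  assert (hu : apery_enumeration S1 w1 u) by (constructor; assumption).
  assert (hv : apery_enumeration S2 w2 v) by (constructor; assumption).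
  split; [|split].
  - intros i Hi. destruct (level_exists hu hv (w1 + w2 + 1 - i)) as [x Hx]; [lia|].
    exists x. apply (Dlev_level hu hv); assumption.
  - intros x. split.
    + intros Ax. pose proof (level_le_top hu hv x Ax). unfold level in *.
      exists (w1 + w2 + 1 - level u w1 v w2 x). split; [unfold level; lia|].
      apply (Dlev_level hu hv); [unfold level; lia|]. unfold level. split; [exact Ax|lia].
    + intros [i [Hi HD]]. apply (Dlev_level hu hv) in HD; tauto.
  - intros k Hk x. rewrite (Dlev_level hu hv) by lia.
    replace (w1 + w2 + 1 - (w1 + w2 + 1 - k)) with k by lia.
    apply (aform_level hu hv). lia.
Qed.
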